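(* Let $k>0$, let $\lambda$ be a $k$-ineffable$'$ cardinal, and let $g:\lambda^k\to\lambda^k$. Then there exists an infinite set $B\subseteq\lambda$ such that $g$ has at most $\mathrm{ot}(k)$ regressive values on $B^k$.
   Context: Ordinals are von Neumann ordinals, ordered by $<$. For $x\in\lambda^k$, $\min(x)$ and $|x|$ are the least and greatest coordinates; $y$ is a regressive value of $g$ on $B^k$ iff $y=g(x)$ for some $x\in B^k$ with $|y|<\min(x)$. $S_k(X)$ is the set of $k$-element subsets of $X$. A function $f:S_k(\lambda)\to\lambda$ is regressive iff for all $A\in S_k(\lambda)$, $f(A)<\min(A)$ or $\min(A)=0$. $\lambda$ is $k$-ineffable$'$ iff $\lambda$ is an infinite cardinal and for every regressive $f:S_k(\lambda)\to\lambda$ there exists a stationary $A\subseteq\lambda$ such that $f$ is constant on $S_k(A)$. $\mathrm{ot}(k)$ is the number of order types of elements of $\mathbb{N}^k$, where $x,y$ have the same order type iff $x_i<x_j\Leftrightarrow y_i<y_j$ for all $i,j$. *)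

From Stdlib Require Import List.
From mathcomp Require Import all_boot.
Set Implicit Arguments. Unset Strict Implicit. Unset Printing Implicit Defensive.

(* lambda is represented by a type T equipped with a strict well-order lt;
   (T, lt) is thus isomorphic to a unique von Neumann ordinal lambda. *)
Record wellorder (T : Type) (lt : T -> T -> Prop) : Prop := {
  wo_irrefl : forall x, ~ lt x x;
  wo_trans : forall x y z, lt x y -> lt y z -> lt x z;
  wo_total : forall x y, x = y \/ lt x y \/ lt y x;
  wo_wf : well_founded lt }.

Definition infinite_pred (T : Type) (P : T -> Prop) : Prop :=
  ~ exists s : seq T, forall x, P x -> List.In x s.

(* the ordinal (T,lt) is a cardinal: not in bijection with any smaller ordinal
   (= proper initial segment) *)
Definition is_cardinal (T : Type) (lt : T -> T -> Prop) : Prop :=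
  forall a : T, ~ exists f : T -> {x : T | lt x a}, bijective f.

Definition infinite_cardinal (T : Type) (lt : T -> T -> Prop) : Prop :=
  infinite_pred (fun _ : T => True) /\ is_cardinal lt.

Definition is_zero (T : Type) (lt : T -> T -> Prop) (z : T) : Prop :=
  forall y, ~ lt y z.

(* k-element subsets of lambda are encoded as strictly increasing k-tuples
   (the increasing enumeration of the subset) *)
Definition incr (T : Type) (lt : T -> T -> Prop) (k : nat) (x : 'I_k -> T) : Prop :=
  forall i j : 'I_k, (i < j)%N -> lt (x i) (x j).

Definition regressive_k (T : Type) (lt : T -> T -> Prop) (k : nat)
  (f : ('I_k -> T) -> T) : Prop :=
  forall x, incr lt x ->
    (forall i, lt (f x) (x i)) \/ (exists i, is_zero lt (x i)).

Definition unbounded (T : Type) (lt : T -> T -> Prop) (C : T -> Prop) : Prop :=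
  forall a, exists c, C c /\ (c = a \/ lt a c).

Definition closed (T : Type) (lt : T -> T -> Prop) (C : T -> Prop) : Prop :=
  forall a, (exists b, lt b a) ->
    (forall b, lt b a -> exists c, C c /\ lt b c /\ lt c a) -> C a.

Definition club (T : Type) (lt : T -> T -> Prop) (C : T -> Prop) : Prop :=
  unbounded lt C /\ closed lt C.

Definition stationary (T : Type) (lt : T -> T -> Prop) (A : T -> Prop) : Prop :=
  forall C, club lt C -> exists x, A x /\ C x.

Definition k_ineffable' (T : Type) (lt : T -> T -> Prop) (k : nat) : Prop :=
  infinite_cardinal lt /\
  forall f : ('I_k -> T) -> T, regressive_k lt f ->
    exists A : T -> Prop, stationary lt A /\
      exists c : T, forall x, incr lt x -> (forall i, A (x i)) -> f x = c.

(* y is a regressive value of g on B^k: y = g x, x in B^k, |y| < min x,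
   i.e. every coordinate of y is below every coordinate of x *)
Definition regressive_value (T : Type) (lt : T -> T -> Prop) (k : nat)
  (g : {ffun 'I_k -> T} -> {ffun 'I_k -> T}) (B : T -> Prop)
  (y : {ffun 'I_k -> T}) : Prop :=
  exists x : {ffun 'I_k -> T}, (forall i, B (x i)) /\ y = g x /\
    forall i j, lt (y i) (x j).

Definition same_ot (k : nat) (x y : {ffun 'I_k -> nat}) : Prop :=
  forall i j : 'I_k, (x i < x j)%N = (y i < y j)%N.

Definition ot_class (k : nat) (P : {ffun 'I_k -> nat} -> Prop) : Prop :=
  exists x, P = same_ot x.

(* the set R has at most ot(k) elements: it injects into the set of order
   types of elements of N^k *)
Definition at_most_ot (X : Type) (k : nat) (R : X -> Prop) : Prop :=
  exists h : {y : X | R y} -> {P : {ffun 'I_k -> nat} -> Prop | ot_class P},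
    injective h.

From Pilot Require Import Defs.
From mathcomp Require Import all_boot boolp.
From Stdlib Require Import ClassicalEpsilon.
Set Implicit Arguments. Unset Strict Implicit. Unset Printing Implicit Defensive.

(* A k-tuple [x] is an increasing tuple [S] composed with its pattern of dense ranks, which
   encodes the order type of [x]. So it suffices to find an infinite set on which, for every
   pattern [r], the regressive value of [g] at [S \o r] does not depend on the increasing tuple
   [S]. Apply k-ineffability to the regressive function coding this finite table of values into
   one ordinal below [min S]; the coding uses an injective pairing function, which exists and has
   a club of closure points because the pressing-down property makes all sequences of length
   omega and all families indexed by an initial segment bounded. The homogeneous stationary set,
   cut down to the closure points, is the required set. *)

Lemma bijective_of_inj_surj (A B : Type) (f : A -> B) :
  injective f -> (forall b, exists a, f a = b) -> bijective f.
Proof.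
move=> f_inj f_surj; pose h b := sval (cid (f_surj b)).
have fh b : f (h b) = b by exact: svalP (cid (f_surj b)).
by exists h => [a|b //]; apply: f_inj; rewrite fh.
Qed.

Lemma infinite_inhabited (X : Type) : infinite_pred (fun _ : X => True) -> inhabited X.
Proof.
move=> X_inf; apply: NNPP => X_empty; apply: X_inf; exists [::] => x.
by case: X_empty; constructor.
Qed.

(* Repeatedly pick an element outside the finite list of earlier picks. *)
Lemma infinite_injective_seq (X : Type) (a : X) : infinite_pred (fun _ : X => True) ->
  exists u : nat -> X, injective u /\ forall n, u n <> a.
Proof.
move=> X_inf.
have fresh s : exists x : X, ~ List.In x s.
  by apply: NNPP => h; apply: X_inf; exists s => x _; apply: NNPP => hx; apply: h; exists x.
pose next s := sval (cid (fresh s)).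
pose l n := iter n (fun s => next s :: s) [:: a].
have l_old m n : (m < n)%N -> List.In (next (l m)) (l n).
  elim: n => // n IH; rewrite ltnS leq_eqVlt => /orP [/eqP ->|lt_mn]; first by left.
  by right; apply: IH.
have l_new n : ~ List.In (next (l n)) (l n) by exact: svalP (cid (fresh (l n))).
exists (fun n => next (l n)); split => [m n /= eq_mn|n].
  by case: (ltngtP m n) => // /l_old; [rewrite eq_mn => /l_new|rewrite -eq_mn => /l_new].
have a_l : List.In a (l n) by elim: n => [|n IH]; [left|right].
by move=> /= eq_a; apply: (l_new n); rewrite eq_a.
Qed.

(* Hilbert's hotel: shifting along [u] frees the room [a]. *)
Lemma hilbert_hotel (X : Type) (u : nat -> X) (a : X) :
  injective u -> (forall n, u n <> a) ->
  exists f : X -> X, injective f /\ forall y, y <> a <-> exists x, f x = y.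
Proof.
move=> u_inj u_a.
pose f x := if pselect (x = a) is left _ then u 0
  else if pselect (exists n, x = u n) is left h then u (sval (cid h)).+1 else x.
have fa : f a = u 0 by rewrite /f; case: pselect.
have fu n : f (u n) = u n.+1.
  rewrite /f; case: pselect => [ua|_]; first by case: (u_a n).
  case: pselect => [h|nu]; last by case: nu; exists n.
  by case: (cid h) => m /= /u_inj ->.
have fx x : x <> a -> (forall n, x <> u n) -> f x = x.
  move=> xa xu; rewrite /f; case: pselect => // _.
  by case: pselect => // h; case: (xu _ (svalP (cid h))).
have cases x : x = a \/ (exists n, x = u n) \/ (x <> a /\ forall n, x <> u n).
  case: (classic (x = a)) => [|xa]; first by left.
  case: (classic (exists n, x = u n)) => [|xu]; first by right; left.
  by right; right; split=> // n xn; apply: xu; exists n.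
exists f; split=> [x y|y].
  case: (cases x) => [->|[[n ->]|[xa xu]]]; case: (cases y) => [->|[[m ->]|[ya yu]]] //;
    rewrite ?fa ?fu ?fx //;
    first [by move=> /u_inj | by move=> /u_inj [->] | by move=> /esym /yu | by move=> /xu].
split=> [ya|[x <-]].
  case: (cases y) => [//|[[[|n] ->]|[_ yu]]]; [by exists a|by exists (u n)|by exists y; rewrite fx].
case: (cases x) => [->|[[n ->]|[xa xu]]]; rewrite ?fa ?fu ?fx //; exact: u_a.
Qed.

Section WellOrder.
Variables (T : Type) (lt : T -> T -> Prop).
Hypothesis lt_wo : wellorder lt.

Definition le a b := a = b \/ lt a b.

Definition cofinal (U : T -> Prop) := forall a, exists u, U u /\ lt a u.

Lemma lt_irrefl a : ~ lt a a. Proof. exact: wo_irrefl lt_wo a. Qed.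

Lemma lt_trans {a b c} : lt a b -> lt b c -> lt a c. Proof. exact: wo_trans. Qed.

Lemma lt_total a b : a = b \/ lt a b \/ lt b a. Proof. exact: wo_total. Qed.

Lemma le_of_nlt {a b} : ~ lt a b -> le b a.
Proof. by case: (lt_total a b) => [->|[//|]]; [left|right]. Qed.

Lemma nlt_of_le {a b} : le a b -> ~ lt b a.
Proof. by case=> [->|ab ba]; [exact: lt_irrefl|exact: lt_irrefl (lt_trans ab ba)]. Qed.

Lemma le_lt_trans {a b c} : le a b -> lt b c -> lt a c.
Proof. by case=> [->|ab /(lt_trans ab)]. Qed.

Lemma lt_le_trans {a b c} : lt a b -> le b c -> lt a c.
Proof. by move=> ab [<-|/(lt_trans ab)]. Qed.

Lemma le_trans {a b c} : le a b -> le b c -> le a c.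
Proof. by case=> [->|ab] // bc; right; exact: lt_le_trans ab bc. Qed.

Lemma eq_of_nlt a b : ~ lt a b -> ~ lt b a -> a = b.
Proof. by case: (lt_total a b) => [|[]]. Qed.

Lemma exists_least (P : T -> Prop) a : P a -> exists m, P m /\ forall y, lt y m -> ~ P y.
Proof.
elim/(well_founded_ind (wo_wf lt_wo)): a => a IH Pa.
case: (classic (exists y, lt y a /\ P y)) => [[y [ya Py]]|]; first exact: IH ya Py.
by move=> no_below; exists a; split=> // y ya Py; apply: no_below; exists y.
Qed.

Definition tmax a b := if pselect (lt a b) then b else a.

Lemma le_tmaxl a b : le a (tmax a b).
Proof. by rewrite /tmax; case: pselect => ab; [right|left]. Qed.

Lemma le_tmaxr a b : le b (tmax a b).
Proof. by rewrite /tmax; case: pselect => [ab|/le_of_nlt //]; left. Qed.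

Lemma tmax_lt a b c : lt a c -> lt b c -> lt (tmax a b) c.
Proof. by move=> ac bc; rewrite /tmax; case: pselect. Qed.

Lemma incr_of_succ (q : nat -> T) :
  (forall n, lt (q n) (q n.+1)) -> forall m n, (m < n)%N -> lt (q m) (q n).
Proof.
move=> q_succ m; elim=> // n IH; rewrite ltnS leq_eqVlt => /orP [/eqP ->//|/IH].
by move/lt_trans; apply.
Qed.

Lemma incr_seq_in (U : T -> Prop) s : cofinal U -> U s ->
  exists q : nat -> T, q 0 = s /\ (forall n, U (q n)) /\ forall n, lt (q n) (q n.+1).
Proof.
move=> U_unb Us; pose nxt a := epsilon (inhabits s) (fun u => U u /\ lt a u).
have nxtP a : U (nxt a) /\ lt a (nxt a) by exact: epsilon_spec (U_unb a).
exists (fun n => iter n nxt s); split=> //.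
by split=> [[|n] //|n] /=; [exact: (nxtP _).1|exact: (nxtP _).2].
Qed.

Lemma stationary_meet_club (A C : T -> Prop) : stationary lt A -> Defs.closed lt C ->
  cofinal C -> cofinal (fun x => A x /\ C x).
Proof.
move=> A_stat C_closed C_unb a.
have [x [Ax [Cx ax]]] : exists x, A x /\ C x /\ lt a x.
  apply: (A_stat (fun x => C x /\ lt a x)); split.
    move=> b; have [c [Cc abc]] := C_unb (tmax a b).
    exists c; split; first by split=> //; exact: le_lt_trans (le_tmaxl a b) abc.
    by right; exact: le_lt_trans (le_tmaxr a b) abc.
  move=> c [b bc] c_lim; split.
    by apply: C_closed; [exists b|move=> d /c_lim [e [[Ce _] de]]; exists e].
  by have [e [[_ ae] [_ ec]]] := c_lim b bc; exact: lt_trans ae ec.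
by exists x.
Qed.

Lemma incr_seq_inj (q : nat -> T) : (forall n, lt (q n) (q n.+1)) -> injective q.
Proof.
move=> /incr_of_succ q_incr m n qmn.
by case: (ltngtP m n) => // /q_incr; rewrite qmn => /lt_irrefl.
Qed.

Definition gmax (p : T * T) := tmax p.1 p.2.

Definition godel_lt (p q : T * T) := lt (gmax p) (gmax q) \/
  (gmax p = gmax q /\ (lt p.1 q.1 \/ (p.1 = q.1 /\ lt p.2 q.2))).

Lemma godel_lt_wf : well_founded godel_lt.
Proof.
have wf := wo_wf lt_wo.
suff acc m a b : gmax (a, b) = m -> Acc godel_lt (a, b) by move=> [a b]; exact: acc.
elim/(well_founded_ind wf): m a b => m IHm a.
elim/(well_founded_ind wf): a => a IHa b.
elim/(well_founded_ind wf): b => b IHb ab_m.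
constructor=> -[c d]; rewrite /godel_lt ab_m /= => -[|[cd_m [|[ca db]]]].
- by move/IHm; apply.
- by move/IHa; apply.
- by move: cd_m; rewrite ca => /(IHb d db).
Qed.

Lemma godel_lt_le_gmax q p : godel_lt q p -> le q.1 (gmax p) /\ le q.2 (gmax p).
Proof.
have le_q : le (gmax q) (gmax p) -> le q.1 (gmax p) /\ le q.2 (gmax p).
  by move=> qp; split; apply: le_trans qp; [exact: le_tmaxl|exact: le_tmaxr].
by case=> [qp|[qp _]]; apply: le_q; [right|left].
Qed.

Lemma godel_lt_total p q : p <> q -> godel_lt p q \/ godel_lt q p.
Proof.
move: p q => [a b] [c d] neq.
case: (lt_total (gmax (a, b)) (gmax (c, d))) => [m_eq|[]]; [|by left; left|by right; left].
case: (lt_total a c) => [ac|[ac|ca]].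
- case: (lt_total b d) => [bd|[bd|db]]; first by case: neq; rewrite ac bd.
    by left; right; split=> //; right.
  by right; right; split=> //; right.
- by left; right; split=> //; left.
- by right; right; split=> //; left.
Qed.

Lemma infinite_cardinal_no_max : infinite_cardinal lt -> forall a, exists b, lt a b.
Proof.
move=> [T_inf T_card] a; apply: NNPP => a_max.
have below y : y <> a -> lt y a.
  by move=> ya; case: (lt_total y a) => [|[|ay]] //; case: a_max; exists y.
have [u [u_inj u_a]] := infinite_injective_seq a T_inf.
have [f [f_inj f_img]] := hilbert_hotel u_inj u_a.
pose F t := exist (fun y => lt y a) (f t) (below _ ((f_img _).2 (ex_intro _ t erefl))).
apply: (T_card a); exists F; apply: bijective_of_inj_surj => [s t /(congr1 sval)/f_inj //|[y ya]].
have /(f_img y).1 [t ft] : y <> a by move=> ay; rewrite ay in ya; exact: lt_irrefl ya.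
by exists t; apply: eq_sig_hprop => [z p q|]; [exact: Prop_irrelevance|].
Qed.

Section DenseRank.
Variables (k : nat) (x : 'I_k -> T).

Definition first_occ (j : 'I_k) := forall l : 'I_k, (l < j)%N -> x l <> x j.

(* The number of distinct values below [x i]. *)
Definition dense_rank (i : 'I_k) := #|[set j | `[< lt (x j) (x i) /\ first_occ j >]]|.

Lemma mem_dense_rank_set i j :
  j \in [set j | `[< lt (x j) (x i) /\ first_occ j >]] <-> lt (x j) (x i) /\ first_occ j.
Proof. by rewrite inE; split=> /asboolP. Qed.

Lemma exists_first_occ i : exists j, x j = x i /\ first_occ j.
Proof.
suff /(_ _ i erefl) : forall n (i : 'I_k), val i = n -> exists j, x j = x i /\ first_occ j by [].
elim/ltn_ind=> n IH {}i ein.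
case: (classic (first_occ i)) => [|not_first]; first by exists i.
have [l [li xl]] : exists l : 'I_k, (l < i)%N /\ x l = x i.
  by apply: NNPP => h; apply: not_first => l li xl; apply: h; exists l.
have [|j [xj fj]] := IH l _ l erefl; first by rewrite -ein.
by exists j; rewrite xj.
Qed.

Lemma dense_rank_lt i j : lt (x i) (x j) -> (dense_rank i < dense_rank j)%N.
Proof.
move=> xij; apply: proper_card; apply/properP; split.
  apply/subsetP => l /mem_dense_rank_set [xli fl]; apply/mem_dense_rank_set.
  by split=> //; exact: lt_trans xli xij.
have [f [xf ff]] := exists_first_occ i; exists f; first by apply/mem_dense_rank_set; rewrite xf.
by apply/negP => /mem_dense_rank_set [+ _]; rewrite xf; exact: lt_irrefl.
Qed.

Lemma dense_rank_ltE i j : (dense_rank i < dense_rank j)%N <-> lt (x i) (x j).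
Proof.
split=> [rij|]; last exact: dense_rank_lt.
apply: NNPP => /le_of_nlt xji; move: rij; rewrite ltnNge => /negP; apply.
apply: subset_leq_card; apply/subsetP => l /mem_dense_rank_set [xlj fl].
by apply/mem_dense_rank_set; split=> //; exact: lt_le_trans xlj xji.
Qed.

Lemma dense_rank_inj i j : dense_rank i = dense_rank j -> x i = x j.
Proof.
move=> rij; apply: eq_of_nlt => /dense_rank_lt; by rewrite rij ltnn.
Qed.

Lemma dense_rank_lt_card i : (dense_rank i < k)%N.
Proof.
rewrite -[k]card_ord -cardsT; apply: proper_card; apply/properP; split; first exact: subsetT.
by exists i; [rewrite inE|apply/negP => /mem_dense_rank_set [/lt_irrefl]].
Qed.

(* The first occurrences below [x i] have distinct ranks below [dense_rank i], hence all of them. *)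
Lemma dense_rank_dense i n : (n < dense_rank i)%N -> exists j, dense_rank j = n.
Proof.
move=> n_lt; pose s := map dense_rank (enum [set j | `[< lt (x j) (x i) /\ first_occ j >]]).
have s_uniq : uniq s.
  rewrite map_inj_in_uniq ?enum_uniq // => j l; rewrite !mem_enum.
  move=> /mem_dense_rank_set [_ fj] /mem_dense_rank_set [_ fl] /dense_rank_inj xjl.
  by case: (ltngtP j l) => [/fl/(_ xjl)|/fj/(_ (esym xjl))|/val_inj].
have s_sub : {subset s <= iota 0 (dense_rank i)}.
  move=> m /mapP [j]; rewrite mem_enum => /mem_dense_rank_set [xji _] ->.
  by rewrite mem_iota add0n dense_rank_lt.
have [|_ s_eq] := uniq_min_size s_uniq s_sub; first by rewrite size_iota size_map -cardE.
have : n \in s by rewrite s_eq mem_iota.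
by move=> /mapP [j _ ->]; exists j.
Qed.

End DenseRank.

Lemma dense_rank_ext k (x y : 'I_k -> T) :
  (forall i j, lt (x i) (x j) <-> lt (y i) (y j)) -> dense_rank x =1 dense_rank y.
Proof.
move=> xy i; apply: eq_card => j; rewrite !inE.
have eq_xy a b : x a = x b <-> y a = y b.
  by split=> e; apply: eq_of_nlt => /xy; rewrite e; exact: lt_irrefl.
by apply/asboolP/asboolP => -[/xy ? f]; split=> // l li /eq_xy; apply: f.
Qed.

Section Ineffable.
Variable k : nat.
Hypotheses (k_gt0 : (0 < k)%N) (lt_ineff : k_ineffable' lt k).

Lemma no_max a : exists b, lt a b.
Proof. exact: infinite_cardinal_no_max lt_ineff.1 a. Qed.

Definition zero : T := epsilon (infinite_inhabited lt_ineff.1.1) (is_zero lt).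

Lemma zero_min y : ~ lt y zero.
Proof.
have [t] := infinite_inhabited lt_ineff.1.1.
have [m [_ m_min]] := exists_least (P := fun _ => True) (a := t) I.
suff : is_zero lt zero by apply.
by apply: epsilon_spec; exists m => z /m_min.
Qed.

Definition i0 : 'I_k := Ordinal k_gt0.

Lemma incr_le_i0 x : incr lt x -> forall j, le (x i0) (x j).
Proof.
move=> x_incr j; case: (posnP j) => [j0|/(x_incr i0)]; last by right.
by left; congr x; apply: val_inj.
Qed.

Lemma regressive_of_i0 (f : ('I_k -> T) -> T) :
  (forall x, incr lt x -> lt zero (x i0) -> lt (f x) (x i0)) -> regressive_k lt f.
Proof.
move=> f_reg x x_incr; case: (classic (lt zero (x i0))) => [zx|x0].
  by left=> j; exact: lt_le_trans (f_reg x x_incr zx) (incr_le_i0 x_incr j).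
right; exists i0 => y; rewrite -(eq_of_nlt x0 (@zero_min _)); exact: zero_min.
Qed.

Lemma incr_tuple_in (U : T -> Prop) s : cofinal U -> U s ->
  exists x, incr lt x /\ (forall i, U (x i)) /\ x i0 = s.
Proof.
move=> U_unb Us; have [q [q0 [qU q_succ]]] := incr_seq_in U_unb Us.
by exists (fun i => q i); split=> [i j|]; [exact: incr_of_succ|].
Qed.

Lemma stationary_cofinal (A : T -> Prop) : stationary lt A -> cofinal A.
Proof.
move=> A_stat a; have T_cof : cofinal (fun _ => True) by move=> b; have [c] := no_max b; exists c.
by have [x [[Ax _] ax]] := stationary_meet_club A_stat (fun _ _ _ => I) T_cof a; exists x.
Qed.

Lemma pressing_down (F : T -> T) g :
  (forall t, lt g t -> lt (F t) t) -> exists c, cofinal (fun t => F t = c).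
Proof.
move=> F_reg; pose f (x : 'I_k -> T) := if pselect (lt g (x i0)) then F (x i0) else zero.
have f_reg : regressive_k lt f.
  by apply: regressive_of_i0 => x _ zx; rewrite /f; case: pselect => // gx; exact: F_reg.
have [A [A_stat [c Ac]]] := lt_ineff.2 f f_reg.
exists c => a; have [s [As gas]] := stationary_cofinal A_stat (tmax g a).
have [x [x_incr [xA x0]]] := incr_tuple_in (stationary_cofinal A_stat) As.
exists s; split; last exact: le_lt_trans (le_tmaxr g a) gas.
rewrite -(Ac x x_incr xA) /f x0; case: pselect => // gs; case: gs.
exact: le_lt_trans (le_tmaxl g a) gas.
Qed.

(* For a cofinal [q], mapping [t] to the last [q n] below [t] presses down, yet takes each value
   only boundedly often. *)
Lemma incr_seq_bounded (q : nat -> T) :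
  (forall n, lt (q n) (q n.+1)) -> exists w, forall n, lt (q n) w.
Proof.
move=> q_succ; apply: NNPP => q_unb.
have q_cof t : exists n, ~ lt (q n) t.
  by apply: NNPP => h; apply: q_unb; exists t => n; apply: NNPP => ?; apply: h; exists n.
pose last_below t n := lt (q n) t /\ ~ lt (q n.+1) t.
have last_belowP t : lt (q 0) t -> exists n, last_below t n.
  move=> q0t; have [N] := q_cof t; elim: N => [/(_ q0t) //|N IH qN].
  by case: (classic (lt (q N) t)) => [qNt|/IH //]; exists N.
pose F t := q (epsilon (inhabits 0) (last_below t)).
have F_spec t : lt (q 0) t -> last_below t (epsilon (inhabits 0) (last_below t)).
  by move=> /last_belowP; apply: epsilon_spec.
have [c c_unb] := pressing_down (F := F) (g := q 0) (fun t q0t => (F_spec t q0t).1).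
have [t1 [Ft1 q0t1]] := c_unb (q 0).
pose n1 := epsilon (inhabits 0) (last_below t1).
have [t2 [Ft2 t2_gt]] := c_unb (q n1.+1).
have q0t2 : lt (q 0) t2 by exact: lt_trans (incr_of_succ q_succ (ltn0Sn n1)) t2_gt.
have [_ t2_le] := F_spec t2 q0t2; apply: t2_le.
suff -> : epsilon (inhabits 0) (last_below t2) = n1 by [].
by apply: (incr_seq_inj q_succ); rewrite -/(F t2) Ft2 -Ft1.
Qed.

Lemma seq_bounded (u : nat -> T) : exists w, forall n, lt (u n) w.
Proof.
pose nxt a := epsilon (inhabits a) (lt a).
have nxtP a : lt a (nxt a) by exact: epsilon_spec (no_max a).
pose q n := iteri n (fun m a => nxt (tmax a (u m))) zero.
have q_succ n : lt (q n) (q n.+1) /\ lt (u n) (q n.+1).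
  by split; [exact: le_lt_trans (le_tmaxl _ _) (nxtP _)|exact: le_lt_trans (le_tmaxr _ _) (nxtP _)].
have [w qw] := incr_seq_bounded (fun n => (q_succ n).1).
by exists w => n; exact: lt_trans (q_succ n).2 (qw n.+1).
Qed.

(* Otherwise pick [F t <= g] with [t <= u (F t)] and press down to a constant [c]: then [u c]
   is above arbitrarily large [t]. *)
Lemma bounded_on_le (u : T -> T) g : exists b, forall a, le a g -> lt (u a) b.
Proof.
apply: NNPP => u_unb.
have cover t : exists a, le a g /\ le t (u a).
  apply: NNPP => h; apply: u_unb; exists t => a ag.
  by apply: NNPP => /le_of_nlt tu; apply: h; exists a.
pose F t := epsilon (inhabits g) (fun a => le a g /\ le t (u a)).
have F_spec t : le (F t) g /\ le t (u (F t)) by exact: epsilon_spec (cover t).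
have [c c_unb] := pressing_down (g := g) (fun t gt => le_lt_trans (F_spec t).1 gt).
have [t [Ft ct]] := c_unb (u c).
by move: (F_spec t).2; rewrite Ft => /nlt_of_le.
Qed.

Lemma bounded_on_square (h : T -> T -> T) g :
  exists b, forall a c, le a g -> le c g -> lt (h a c) b.
Proof.
pose ba a := epsilon (inhabits g) (fun b => forall c, le c g -> lt (h a c) b).
have ba_spec a c : le c g -> lt (h a c) (ba a).
  by move: c; apply: epsilon_spec (bounded_on_le (h a) g).
have [b bb] := bounded_on_le ba g.
by exists b => a c ag cg; exact: lt_trans (ba_spec a c cg) (bb a ag).
Qed.

(* Each pair gets a value that avoids the codes of its [godel_lt]-predecessors; these are
   boundedly many, so such a value exists. *)
Definition pair_code : T * T -> T := Fix godel_lt_wf (fun _ => T)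
  (fun p code_below => epsilon (inhabits (gmax p))
     (fun t => forall q (qp : godel_lt q p), code_below q qp <> t)).

Lemma pair_codeE p :
  pair_code p = epsilon (inhabits (gmax p)) (fun t => forall q, godel_lt q p -> pair_code q <> t).
Proof.
rewrite /pair_code Fix_eq // => r f f' ff'.
have -> // : f = f'.
by apply: functional_extensionality_dep => q; apply: functional_extensionality_dep.
Qed.

Lemma pair_code_inj : injective pair_code.
Proof.
have fresh p : forall q, godel_lt q p -> pair_code q <> pair_code p.
  rewrite [pair_code p]pair_codeE.
  apply: (epsilon_spec _ (fun t => forall q, godel_lt q p -> pair_code q <> t)).
  have [b b_bound] := bounded_on_square (fun a c => pair_code (a, c)) (gmax p).
  exists b => q /godel_lt_le_gmax [q1 q2] qb.
  by have := b_bound _ _ q1 q2; rewrite -surjective_pairing qb => /lt_irrefl.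
move=> p q pq; apply: NNPP => /godel_lt_total [/fresh|/fresh]; by rewrite pq.
Qed.

Definition code_closed (c : T) := forall a b, lt a c -> lt b c -> lt (pair_code (a, b)) c.

Lemma code_closed_closed : Defs.closed lt code_closed.
Proof.
move=> c _ c_lim a b ac bc.
have [d [d_closed [abd dc]]] := c_lim _ (tmax_lt ac bc).
apply: lt_trans (d_closed _ _ _ _) dc.
  exact: le_lt_trans (le_tmaxl a b) abd.
exact: le_lt_trans (le_tmaxr a b) abd.
Qed.

(* The supremum of an omega-chain [a < c_1 < c_2 < ...], where [c_(n+1)] bounds the codes of
   pairs below [c_n], is closed under [pair_code]. *)
Lemma code_closed_cofinal : cofinal code_closed.
Proof.
move=> a; pose Next c b := lt c b /\ forall x y, le x c -> le y c -> lt (pair_code (x, y)) b.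
have NextP c : exists b, Next c b.
  have [b b_bound] := bounded_on_square (fun x y => pair_code (x, y)) c.
  have [w cw] := no_max c; exists (tmax b w); split; first exact: lt_le_trans cw (le_tmaxr _ _).
  by move=> x y xc yc; exact: lt_le_trans (b_bound x y xc yc) (le_tmaxl _ _).
pose chain n := iter n (fun c => epsilon (inhabits c) (Next c)) a.
have chain_next n : Next (chain n) (chain n.+1) by exact: epsilon_spec (NextP _).
have chain_le m n : (m <= n)%N -> le (chain m) (chain n).
  rewrite leq_eqVlt => /orP [/eqP ->|mn]; first by left.
  by right; apply: incr_of_succ mn => i; exact: (chain_next i).1.
have [ub ub_chain] := seq_bounded chain.
have [c [c_ub c_min]] := exists_least (P := fun x => forall n, lt (chain n) x) ub_chain.
have below x : lt x c -> exists n, le x (chain n).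
  move=> /c_min xc; apply: NNPP => no_n; apply: xc => n.
  by apply: NNPP => /le_of_nlt xn; apply: no_n; exists n.
exists c; split; last exact: c_ub 0.
move=> x y /below [m xm] /below [n yn]; apply: lt_trans (c_ub (maxn m n).+1).
apply: (chain_next _).2.
  exact: le_trans xm (chain_le _ _ (leq_maxl m n)).
exact: le_trans yn (chain_le _ _ (leq_maxr m n)).
Qed.

Definition tuple_code (J : finType) (w : J -> T) : T :=
  foldr (fun j acc => pair_code (w j, acc)) zero (enum J).

Lemma tuple_code_inj (J : finType) (w w' : J -> T) : tuple_code w = tuple_code w' -> w =1 w'.
Proof.
move=> ww' j; have : j \in enum J by rewrite mem_enum.
move: ww'; rewrite /tuple_code; elim: (enum J) => //= i s IH /pair_code_inj [wi /IH ws].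
by rewrite in_cons => /orP [/eqP ->|/ws].
Qed.

Lemma tuple_code_lt (J : finType) (w : J -> T) c :
  code_closed c -> lt zero c -> (forall j, lt (w j) c) -> lt (tuple_code w) c.
Proof.
by move=> c_closed zc wc; rewrite /tuple_code; elim: (enum J) => //= j s; exact: c_closed.
Qed.

Lemma cofinal_infinite (B : T -> Prop) : cofinal B -> infinite_pred B.
Proof.
move=> B_unb [s s_cover]; have [m sm] := seq_bounded (fun n => List.nth n s zero).
have [t [Bt mt]] := B_unb m; have [n [_ snt]] := List.In_nth s t zero (s_cover t Bt).
by apply: lt_irrefl (lt_trans (sm n) _); rewrite snt.
Qed.

Lemma tuple_bounded (x : 'I_k -> T) : exists m, forall i, lt (x i) m.
Proof.
have [m xm] := seq_bounded (fun n => x (insubd i0 n)).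
by exists m => i; rewrite -(valKd i0 i); exact: xm.
Qed.

Definition pattern (x : 'I_k -> T) : {ffun 'I_k -> 'I_k} := [ffun i => insubd i0 (dense_rank x i)].

Lemma patternE x i : val (pattern x i) = dense_rank x i.
Proof. by rewrite ffunE val_insubd dense_rank_lt_card. Qed.

(* A tuple is an increasing tuple composed with its pattern; the unused top positions are
   filled with elements of [U] above the tuple. *)
Lemma pattern_factor (U : T -> Prop) (x : 'I_k -> T) : cofinal U -> (forall i, U (x i)) ->
  exists S, [/\ incr lt S, forall t, U (S t), forall i, S (pattern x i) = x i
              & forall t, exists i, le (x i) (S t)].
Proof.
move=> U_unb xU; have [m xm] := tuple_bounded x.
pose U' u := U u /\ lt m u.
have U'_unb : cofinal U'.
  move=> a; have [u [Uu mau]] := U_unb (tmax m a).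
  exists u; split; last exact: le_lt_trans (le_tmaxr m a) mau.
  by split=> //; exact: le_lt_trans (le_tmaxl m a) mau.
have [b [U'b _]] := U'_unb m; have [q [_ [qU' q_succ]]] := incr_seq_in U'_unb U'b.
pose S (t : 'I_k) := if pselect (exists i, dense_rank x i = t) is left h
  then x (sval (cid h)) else q t.
have S_rank i (t : 'I_k) : dense_rank x i = t -> S t = x i.
  move=> rt; rewrite /S; case: pselect => [h|[]]; last by exists i.
  by apply: dense_rank_inj; rewrite (svalP (cid h)) rt.
have S_top (t : 'I_k) : ~ (exists i, dense_rank x i = t) -> S t = q t by rewrite /S; case: pselect.
exists S; split.
- move=> t t' tt'; case: (classic (exists i, dense_rank x i = t')) => [[i' r']|top'].
    have [|i r] := @dense_rank_dense _ x i' t; first by rewrite r'.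
    by rewrite (S_rank _ _ r) (S_rank _ _ r'); apply/dense_rank_ltE; rewrite r r'.
  rewrite (S_top _ top'); case: (classic (exists i, dense_rank x i = t)) => [[i r]|top].
    by rewrite (S_rank _ _ r); exact: lt_trans (xm i) (qU' t').2.
  by rewrite (S_top _ top); exact: incr_of_succ.
- move=> t; case: (classic (exists i, dense_rank x i = t)) => [[i r]|top].
    by rewrite (S_rank _ _ r).
  by rewrite (S_top _ top); exact: (qU' t).1.
- by move=> i; apply: S_rank; rewrite patternE.
- move=> t; case: (classic (exists i, dense_rank x i = t)) => [[i r]|top].
    by exists i; rewrite (S_rank _ _ r); left.
  by exists i0; rewrite (S_top _ top); right; exact: lt_trans (xm i0) (qU' t).2.
Qed.

Section RegressiveValues.
Variable g : {ffun 'I_k -> T} -> {ffun 'I_k -> T}.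

Definition reindex (S : 'I_k -> T) (r : {ffun 'I_k -> 'I_k}) : {ffun 'I_k -> T} :=
  [ffun i => S (r i)].

(* The regressive values of [g] at all reindexings of [S], with junk value [zero] elsewhere. *)
Definition value_table (S : 'I_k -> T) (p : {ffun 'I_k -> 'I_k} * 'I_k) : T :=
  if pselect (forall j i, lt (g (reindex S p.1) j) (S i)) then g (reindex S p.1) p.2 else zero.

Definition table_code (S : 'I_k -> T) : T :=
  if pselect (forall i, code_closed (S i) /\ lt zero (S i)) then tuple_code (value_table S)
  else zero.

Lemma table_code_regressive : regressive_k lt table_code.
Proof.
apply: regressive_of_i0 => S _ zS; rewrite /table_code; case: pselect => // S_closed.
apply: tuple_code_lt => [|//|p]; first exact: (S_closed i0).1.
by rewrite /value_table; case: pselect => // S_reg; apply: S_reg.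
Qed.

Lemma value_table_regressive (U : T -> Prop) (x : {ffun 'I_k -> T}) :
  cofinal U -> (forall i, U (x i)) -> (forall i j, lt (g x i) (x j)) ->
  exists S, [/\ incr lt S, forall i, U (S i) & forall j, value_table S (pattern x, j) = g x j].
Proof.
move=> U_unb xU x_reg; have [S [S_incr SU S_pat S_top]] := pattern_factor U_unb xU.
have reindexE : reindex S (pattern x) = x by apply/ffunP => i; rewrite ffunE S_pat.
exists S; split=> // j; rewrite /value_table /= reindexE; case: pselect => // [[j' t]].
by have [i xi] := S_top t; exact: lt_le_trans (x_reg j' i) xi.
Qed.

Definition table_homogeneous (B : T -> Prop) := forall S S', incr lt S -> incr lt S' ->
  (forall i, B (S i)) -> (forall i, B (S' i)) -> value_table S =1 value_table S'.

(* Witnesses with the same order type have the same pattern, and the regressive value is the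
   entry of the (homogeneous) value table at that pattern. *)
Lemma homogeneous_at_most_ot (B : T -> Prop) :
  cofinal B -> table_homogeneous B -> at_most_ot k (regressive_value lt g B).
Proof.
move=> B_unb B_hom.
pose wit (y : {y | regressive_value lt g B y}) := sval (cid (svalP y)).
have witP y : [/\ forall i, B (wit y i), sval y = g (wit y) & forall i j, lt (sval y i) (wit y j)].
  by case: (svalP (cid (svalP y))) => ? [? ?]; split.
pose ranks (x : {ffun 'I_k -> T}) : {ffun 'I_k -> nat} := [ffun i => dense_rank x i].
exists (fun y => exist (@ot_class k) (same_ot (ranks (wit y))) (ex_intro _ _ erefl)).
move=> y1 y2 /(congr1 sval) /= same12.
apply: eq_sig_hprop => [? ? ?|]; first exact: Prop_irrelevance.
have [B1 gy1 y1_reg] := witP y1; have [B2 gy2 y2_reg] := witP y2.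
have ranks12 : same_ot (ranks (wit y1)) (ranks (wit y2)) by rewrite same12.
have lt12 i j : lt (wit y1 i) (wit y1 j) <-> lt (wit y2 i) (wit y2 j).
  by rewrite -!dense_rank_ltE; have := ranks12 i j; rewrite !ffunE => ->.
have pat12 : pattern (wit y1) = pattern (wit y2).
  by apply/ffunP => i; rewrite !ffunE (dense_rank_ext lt12).
have [|S1 [S1_incr S1B S1_tab]] := value_table_regressive B_unb B1; first by rewrite -gy1.
have [|S2 [S2_incr S2B S2_tab]] := value_table_regressive B_unb B2; first by rewrite -gy2.
apply/ffunP => j; rewrite gy1 gy2 -S1_tab -S2_tab pat12.
exact: B_hom.
Qed.

Lemma exists_cofinal_homogeneous : exists B, cofinal B /\ table_homogeneous B.
Proof.
have [A [A_stat [c Ac]]] := lt_ineff.2 _ table_code_regressive.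
pose C t := code_closed t /\ lt zero t.
have C_closed : Defs.closed lt C.
  move=> a [b ba] a_lim; split.
    by apply: code_closed_closed; [exists b|move=> d /a_lim [e [[]]]; exists e].
  by have [e [[_ ze] [_ ea]]] := a_lim b ba; exact: lt_trans ze ea.
have C_unb : cofinal C.
  move=> a; have [d [d_closed zad]] := code_closed_cofinal (tmax zero a).
  exists d; split; last exact: le_lt_trans (le_tmaxr _ _) zad.
  by split=> //; exact: le_lt_trans (le_tmaxl _ _) zad.
exists (fun t => A t /\ C t); split; first exact: stationary_meet_club.
have table_codeE S : (forall i, C (S i)) -> table_code S = tuple_code (value_table S).
  by move=> SC; rewrite /table_code; case: pselect => // nC; case: nC.
move=> S S' S_incr S'_incr SB S'B; apply: tuple_code_inj.
rewrite -(table_codeE _ (fun i => (SB i).2)) -(table_codeE _ (fun i => (S'B i).2)).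
by rewrite (Ac S S_incr (fun i => (SB i).1)) (Ac S' S'_incr (fun i => (S'B i).1)).
Qed.

End RegressiveValues.
End Ineffable.
End WellOrder.

Theorem lemma4p10 (T : Type) (lt : T -> T -> Prop) (k : nat) :
  wellorder lt -> (0 < k)%N -> k_ineffable' lt k ->
  forall g : {ffun 'I_k -> T} -> {ffun 'I_k -> T},
  exists B : T -> Prop, infinite_pred B /\
    at_most_ot k (regressive_value lt g B).
Proof.
move=> lt_wo k_gt0 lt_ineff g.
have [B [B_cof B_hom]] := exists_cofinal_homogeneous lt_wo k_gt0 lt_ineff g.
exists B; split; first exact (cofinal_infinite lt_wo k_gt0 lt_ineff B_cof).
exact (homogeneous_at_most_ot lt_wo k_gt0 B_cof B_hom).
Qed.
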